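(* Let $h,n\geq2$ and let $U,V\leq G$ be such that $\langle U,V\rangle$ is regular. (i) If $p^U\subseteq p^V$ for every $p\in\mathcal{P}$, then $\mathcal{F}^V\subseteq\mathcal{F}^U$. (ii) If $p^U=p^V$ for every $p\in\mathcal{P}$, then $\mathcal{F}^V=\mathcal{F}^U$.
   Context: Permutations compose as $(\sigma\tau)(x)=\sigma(\tau(x))$. Let $G=S_h\times S_n$ and $\mathcal{P}=(S_n)^h$ (preference profiles), with $G$ acting by $(p^{(\varphi,\psi)})_i=\psi\,p_{\varphi^{-1}(i)}$; for $U\leq G$, $p^U=\{p^g:g\in U\}$. $U\leq G$ is regular if for every $p\in\mathcal{P}$, $\{g\in U:p^g=p\}\subseteq S_h\times\{id\}$. A social preference function is any $F:\mathcal{P}\to S_n$; $\mathcal{F}^U$ denotes the set of $U$-symmetric ones, i.e. those with $F(p^{(\varphi,\psi)})=\psi F(p)$ for all $p\in\mathcal{P}$, $(\varphi,\psi)\in U$. *)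

From HB Require Import structures.
From mathcomp Require Import all_boot all_fingroup.
Set Implicit Arguments. Unset Strict Implicit. Unset Printing Implicit Defensive.
Local Open Scope group_scope.

Definition Gtype (h n : nat) := ({perm 'I_h} * {perm 'I_n})%type.

Definition profile (h n : nat) := {ffun 'I_h -> {perm 'I_n}}.

(* Composition in the paper: (sigma tau)(x) = sigma (tau x).
   MathComp's perm product is (s * t) x = t (s x), so the paper's
   sigma tau is the MathComp product tau * sigma. *)
Definition pcomp (n : nat) (s t : {perm 'I_n}) : {perm 'I_n} := t * s.

Definition pact (h n : nat) (p : profile h n) (g : Gtype h n) : profile h n :=
  [ffun i => pcomp g.2 (p (g.1^-1 i))].

Definition orbitU (h n : nat) (p : profile h n) (U : {set Gtype h n})
  : {set profile h n} := [set pact p g | g in U].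

Definition regular (h n : nat) (U : {set Gtype h n}) : Prop :=
  forall p : profile h n, forall g, g \in U -> pact p g = p -> g.2 = 1.

Definition Usymmetric (h n : nat) (U : {set Gtype h n})
  (F : profile h n -> {perm 'I_n}) : Prop :=
  forall p : profile h n, forall g, g \in U -> F (pact p g) = pcomp g.2 (F p).

From HB Require Import structures.
From mathcomp Require Import all_boot all_fingroup.
Local Open Scope group_scope.

(* If p^u = p^v with u, v in a regular group W, then u v^-1 stabilises p,
   so u and v act identically on the alternatives. Given u in U, the orbit
   hypothesis provides such a v in V, and V-symmetry of F at p^u = p^v is
   then exactly U-symmetry for u. *)

Lemma pact1 (h n : nat) (p : profile h n) : pact p 1 = p.
Proof.
by apply/ffunP => i; apply/permP => x; rewrite ffunE /pcomp invg1 !perm1 permM perm1.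
Qed.

Lemma pactM (h n : nat) (p : profile h n) (g g' : Gtype h n) :
  pact (pact p g) g' = pact p (g * g').
Proof.
by apply/ffunP => i; apply/permP => x; rewrite !ffunE /pcomp /= !permM invMg permM.
Qed.

Lemma regular_pact_eq {h n : nat} {W : {group Gtype h n}} {p : profile h n}
    {u v : Gtype h n} :
  regular W -> u \in W -> v \in W -> pact p u = pact p v -> u.2 = v.2.
Proof.
move=> regW uW vW puv.
have uv_stab : pact p (u * v^-1) = p by rewrite -pactM puv pactM mulgV pact1.
have /eqP : (u * v^-1).2 = 1 by apply: regW uv_stab; rewrite groupM ?groupV.
by rewrite mulg_eq1 invgK => /eqP.
Qed.

Lemma Usymmetric_orbit_subset {h n : nat} {W U V : {group Gtype h n}}
    {F : profile h n -> {perm 'I_n}} :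
  regular W -> U \subset W -> V \subset W ->
  (forall p : profile h n, orbitU p U \subset orbitU p V) ->
  Usymmetric V F -> Usymmetric U F.
Proof.
move=> regW sUW sVW sUV symV p u uU.
have /imsetP[v vV puv] : pact p u \in orbitU p V.
  by apply: subsetP (sUV p) _ _; apply: imset_f.
by rewrite puv symV // (regular_pact_eq regW (subsetP sUW u uU) (subsetP sVW v vV) puv).
Qed.

Theorem mainTheorem14 (h n : nat) (hh : 2 <= h) (hn : 2 <= n)
  (U V : {group Gtype h n}) (hreg : regular (<< U :|: V >>)) :
  ((forall p : profile h n, orbitU p U \subset orbitU p V) ->
     forall F : profile h n -> {perm 'I_n}, Usymmetric V F -> Usymmetric U F) /\
  ((forall p : profile h n, orbitU p U = orbitU p V) ->
     forall F : profile h n -> {perm 'I_n}, Usymmetric V F <-> Usymmetric U F).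
Proof.
have sUW : U \subset << U :|: V >> by rewrite sub_gen ?subsetUl.
have sVW : V \subset << U :|: V >> by rewrite sub_gen ?subsetUr.
split=> [sUV F | eqUV F]; first exact: Usymmetric_orbit_subset hreg sUW sVW sUV.
by split; apply: Usymmetric_orbit_subset hreg _ _ _ => // p; rewrite eqUV.
Qed.
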